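(* There exist universal positive constants $K_1,K_2$ such that for all integers $N,P\ge 2$, with $x=\frac{\log N}{N}+\frac{\log P}{P}$, $$\frac{\mathrm{Vol}(\mathscr B)}{\mathrm{Vol}(\mathscr B_0)}\le K_1\sqrt{x}+K_2\,x^{3/2}.$$
   Context: $\log$ is base 2. For a probability vector $(z_1,\ldots,z_I)$, $H(z_1,\ldots,z_I)=\sum_i z_i\log(1/z_i)$. Let $\mathscr B_0\subset[0,1]^3$ be the set of points $(\overline a,f_0,f_1)$ with $0<\overline a,f_0,f_1<1$ and $f_0+f_1<1$ (so $\mathrm{Vol}(\mathscr B_0)=1/2$). Given $N,P$, let $\mathscr B\subset\mathscr B_0$ be the set of points $(\overline a,f_0,f_1)\in\mathscr B_0$ with $$H(\overline a,1-\overline a)-H(f_0,f_1,1-f_0-f_1)+(f_0+f_1)\in\left(-x,\,x\right],\qquad x=\frac{\log N}{N}+\frac{\log P}{P}.$$ $\mathrm{Vol}$ denotes Lebesgue measure in $\mathbb R^3$. *)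

From HB Require Import structures.
From mathcomp Require Import all_boot all_order all_algebra.
From mathcomp Require Import all_classical all_reals all_analysis.
Set Implicit Arguments. Unset Strict Implicit. Unset Printing Implicit Defensive.
Import Order.TTheory GRing.Theory Num.Theory.
Import numFieldNormedType.Exports.
Local Open Scope classical_set_scope.
Local Open Scope ring_scope.

Section Defs.
Variable R : realType.

Definition log2 (t : R) : R := ln t / ln 2.

Definition entropy (z : seq R) : R := \sum_(zi <- z) zi * log2 (1 / zi).

Definition xNP (N P : nat) : R := log2 N%:R / N%:R + log2 P%:R / P%:R.

Definition B0 : set ((R * R) * R) :=
  [set p | let: ((a, f0), f1) := p in
     [/\ 0 < a < 1, 0 < f0 < 1, 0 < f1 < 1 & f0 + f1 < 1]].

Definition Bset (N P : nat) : set ((R * R) * R) :=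
  [set p | B0 p /\ let: ((a, f0), f1) := p in
     let v := entropy [:: a; 1 - a] - entropy [:: f0; f1; 1 - f0 - f1] + (f0 + f1) in
     - xNP N P < v <= xNP N P].

Definition Vol3 : set ((R * R) * R) -> \bar R :=
  ((@lebesgue_measure R \x @lebesgue_measure R) \x @lebesgue_measure R)%E.

End Defs.

From HB Require Import structures.
From mathcomp Require Import all_boot all_order all_algebra.
From mathcomp Require Import all_classical all_reals all_analysis.
From mathcomp Require Import measurable_realfun ring lra.
Set Implicit Arguments. Unset Strict Implicit. Unset Printing Implicit Defensive.
Import Order.TTheory GRing.Theory Num.Theory.
Import numFieldNormedType.Exports.
Local Open Scope classical_set_scope.
Local Open Scope ring_scope.

(* For fixed [(abar, f0)] the function [f1 |-> H(abar, 1 - abar) - H(f0, f1, 1 - f0 - f1)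
   + f0 + f1] is strongly convex on its domain, because [z ln z] has second
   derivative [1/z >= 1] on [(0, 1)].  Strong convexity forbids three points
   [s < t < u] of the section of [B] with [(t - s)(u - t) >= 4x]: the middle
   value would drop below [-x].  So every point of the section lies within
   [2 sqrt x] of one of its ends, the section has length at most [4 sqrt x],
   and Fubini gives [Vol B <= 4 sqrt x].  Since [Vol B0 >= 1/4], one may take
   [K1 = 16]. *)

Section entropy_gap.
Variable R : realType.
Implicit Types s t u y z : R.

Definition xlnx z : R := z * ln z.

Lemma ln_ge_subrV z : 0 < z -> 1 - z^-1 <= ln z.
Proof.
move=> z0; have h : -1 < z^-1 - 1 by rewrite ltrBrDr addrC subrr invr_gt0.
by have := le_ln1Dx h; rewrite addrC subrK lnV ?posrE //; lra.
Qed.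

(* Substituting [y = p^2], [t = q^2] turns the claim into the polynomial
   inequality [(p - q)^2 (4 - (p + q)^2) >= 0] once [ln (p/q) >= 1 - q/p]. *)
Lemma xlnx_strongly_convex y t : 0 < y < 1 -> 0 < t < 1 ->
  xlnx t + (ln t + 1) * (y - t) + (y - t) ^+ 2 / 4 <= xlnx y.
Proof.
move=> /andP[y0 y1] /andP[t0 t1].
set p := Num.sqrt y; set q := Num.sqrt t.
have p0 : 0 < p by rewrite sqrtr_gt0.
have q0 : 0 < q by rewrite sqrtr_gt0.
have p1 : p < 1 by rewrite -sqrtr1 ltr_sqrt.
have q1 : q < 1 by rewrite -sqrtr1 ltr_sqrt.
rewrite -(sqr_sqrtr (ltW y0)) -(sqr_sqrtr (ltW t0)) -/p -/q.
have ln_sqr : ln (p ^+ 2) = ln (q ^+ 2) + 2 * ln (p / q).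
  by rewrite !lnXn // ln_div ?posrE // !mulr2n; lra.
have ln_ratio : 1 - q / p <= ln (p / q).
  by have := @ln_ge_subrV _ (divr_gt0 p0 q0); rewrite invf_div.
have qp : p * (q / p) = q by rewrite mulrC divfK // gt_eqF.
rewrite /xlnx ln_sqr.
set w := ln (p / q) in ln_ratio *; set r := q / p in ln_ratio qp.
have : 2 * p ^+ 2 * (1 - r) <= 2 * p ^+ 2 * w.
  by rewrite ler_pM2l // mulr_gt0 // exprn_gt0.
have : 0 <= (p - q) ^+ 2 * (4 - (p + q) ^+ 2).
  by rewrite mulr_ge0 ?sqr_ge0 // subr_ge0; nra.
nra.
Qed.

Lemma xlnx_three_point s t u : 0 < s -> s < t -> t < u -> u < 1 ->
  (u - s) * xlnx t + (t - s) * (u - t) * (u - s) / 4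
    <= (u - t) * xlnx s + (t - s) * xlnx u.
Proof.
move=> s0 st tu u1.
have Hs : xlnx t + (ln t + 1) * (s - t) + (s - t) ^+ 2 / 4 <= xlnx s.
  by apply: xlnx_strongly_convex; apply/andP; split; lra.
have Hu : xlnx t + (ln t + 1) * (u - t) + (u - t) ^+ 2 / 4 <= xlnx u.
  by apply: xlnx_strongly_convex; apply/andP; split; lra.
nra.
Qed.

Lemma ln2_gt0 : 0 < ln (2 : R).
Proof. by rewrite ln_gt0 // ltr1n. Qed.

Lemma ln2_le1 : ln (2 : R) <= 1.
Proof. by have := @le_ln1Dx R 1 ltac:(lra); rewrite -[1 + 1]/2. Qed.

Lemma entropyE (z : seq R) : all (fun zi => 0 < zi) z ->
  entropy z = - (\sum_(zi <- z) xlnx zi) / ln 2.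
Proof.
rewrite /entropy; elim: z => [|zi z IH] /=; first by rewrite !big_nil oppr0 mul0r.
move=> /andP[zi0 /IH]; rewrite !big_cons => ->.
rewrite /log2 /xlnx div1r lnV ?posrE //; field; exact: lt0r_neq0 ln2_gt0.
Qed.

Lemma three_point_level_gap (g : R -> R) c y s t u : 0 < c -> s < t -> t < u ->
  (u - s) * g t + c * (t - s) * (u - t) * (u - s) <= (u - t) * g s + (t - s) * g u ->
  g s <= y -> g u <= y -> - y < g t -> c * (t - s) * (u - t) < 2 * y.
Proof.
move=> c0 st tu conv gs gu gt; rewrite -(ltr_pM2r (_ : 0 < u - s)); last lra.
nra.
Qed.

Definition entropy_gap (p : (R * R) * R) : R :=
  (xlnx p.1.2 + xlnx p.2 + xlnx (1 - p.1.2 - p.2) - xlnx p.1.1 - xlnx (1 - p.1.1))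
    / ln 2 + (p.1.2 + p.2).

Lemma entropy_gapE a f0 f1 : @B0 R ((a, f0), f1) ->
  entropy [:: a; 1 - a] - entropy [:: f0; f1; 1 - f0 - f1] + (f0 + f1)
    = entropy_gap ((a, f0), f1).
Proof.
move=> [/andP[a0 a1] /andP[f00 _] /andP[f10 _] f01].
rewrite !entropyE /= ?subr_gt0 ?a0 ?a1 ?f00 ?f10 ?ltrBrDr ?(addrC f1) ?f01 //.
rewrite !big_cons !big_nil /entropy_gap /=; field; exact: lt0r_neq0 ln2_gt0.
Qed.

Lemma Bset_entropy_gap N P :
  @Bset R N P = @B0 R `&` entropy_gap @^-1` `]- xNP R N P, xNP R N P].
Proof.
by apply/seteqP; split=> -[[a f0] f1] [B0p]; rewrite /= in_itv /= -(entropy_gapE B0p).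
Qed.

Lemma entropy_gap_three_point a f0 s t u :
  0 < f0 -> 0 < s -> s < t -> t < u -> f0 + u < 1 ->
  (u - s) * entropy_gap ((a, f0), t) + 1 / 2 * (t - s) * (u - t) * (u - s)
    <= (u - t) * entropy_gap ((a, f0), s) + (t - s) * entropy_gap ((a, f0), u).
Proof.
move=> f00 s0 st tu fu1.
(* Up to an affine function of [w], [ln 2 * entropy_gap ((a, f0), w)] is
   [xlnx w + xlnx (1 - f0 - w)], whose two terms each have modulus [1/4];
   dividing by [ln 2 <= 1] only increases the modulus. *)
have Hw := xlnx_three_point s0 st tu ltac:(lra).
have Hr := @xlnx_three_point (1 - f0 - u) (1 - f0 - t) (1 - f0 - s)
  ltac:(lra) ltac:(lra) ltac:(lra) ltac:(lra).
set Q := fun w => xlnx w + xlnx (1 - f0 - w).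
have HQ : (u - s) * Q t + (t - s) * (u - t) * (u - s) / 2
    <= (u - t) * Q s + (t - s) * Q u by rewrite /Q; lra.
have L1 : 1 <= (ln 2 : R)^-1 by rewrite invf_ge1 ?ln2_gt0 ?ln2_le1.
have HQL := ler_wpM2r (_ : 0 <= (ln 2)^-1) HQ.
have HL : 0 <= (t - s) * (u - t) * (u - s) * ((ln 2)^-1 - 1).
  by do 3 (apply: mulr_ge0; last lra); lra.
move: HQL => /(_ ltac:(lra)); rewrite /entropy_gap /= /Q; lra.
Qed.

Lemma Bset_section_gap N P a f0 s t u :
  xsection (@Bset R N P) (a, f0) s -> xsection (@Bset R N P) (a, f0) t ->
  xsection (@Bset R N P) (a, f0) u -> s < t -> t < u ->
  (t - s) * (u - t) < 4 * xNP R N P.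
Proof.
rewrite Bset_entropy_gap /xsection /= !in_setE /= !in_itv /=.
move=> [[_ /andP[f00 _] /andP[s0 _] _] /andP[_ gs]] [_ /andP[gt _]].
move=> [[_ _ _ fu1] /andP[_ gu]] st tu.
have := three_point_level_gap (g := fun w => entropy_gap ((a, f0), w)) (c := 1 / 2)
  ltac:(lra) st tu (entropy_gap_three_point a f00 s0 st tu fu1) gs gu gt.
lra.
Qed.

End entropy_gap.

Section lebesgue_bounds.
Variable R : realType.

Lemma lebesgue_measure_cc (a b : R) : a <= b ->
  lebesgue_measure ([set` `[a, b]] : set R) = (b - a)%:E.
Proof.
by move=> ab; rewrite lebesgue_measure_itv /= lte_fin; case: ltgtP ab => // ->; rewrite subrr.
Qed.

Lemma lebesgue_measure_oo (a b : R) : a <= b ->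
  lebesgue_measure ([set` `]a, b[] : set R) = (b - a)%:E.
Proof.
by move=> ab; rewrite lebesgue_measure_itv /= lte_fin; case: ltgtP ab => // ->; rewrite subrr.
Qed.

Lemma lebesgue_measure_le_of_gap (S : set R) (d : R) : measurable S -> 0 < d ->
  has_lbound S -> has_ubound S ->
  (forall s t u, S s -> S t -> S u -> s < t -> t < u -> (t - s) * (u - t) < d ^+ 2) ->
  (lebesgue_measure S <= (2 * d)%:E)%E.
Proof.
move=> mS d0 lbS ubS gapS.
have [[t0 St0]|S0] := pselect (S !=set0); last first.
  rewrite (_ : S = set0) ?measure0 ?lee_fin ?mulr_ge0 ?ltW //.
  by apply/seteqP; split=> y // Sy; apply: S0; exists y.
have infS : has_inf S by split; [exists t0|].
have supS : has_sup S by split; [exists t0|].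
set al := inf S; set be := sup S.
(* A point of [S] farther than [d] from both [inf S] and [sup S] would have
   points of [S] more than [d] away on either side. *)
have cover : S `<=` [set` `[al, al + d]] `|` [set` `[be - d, be]].
  move=> t St; rewrite /= !in_itv /=.
  have al_t : al <= t by exact: ge_inf.
  have t_be : t <= be by exact: sup_upper_bound.
  have [|h1] := lerP t (al + d); first by left; apply/andP; split.
  have [|h2] := lerP (be - d) t; first by right; apply/andP; split.
  have [s Ss hs] := inf_adherent (eps := t - d - al) ltac:(lra) infS.
  have [u Su hu] := sup_adherent (eps := be - (t + d)) ltac:(lra) supS.
  rewrite -/al -/be in hs hu.
  have far : d ^+ 2 <= (t - s) * (u - t) by rewrite expr2; apply: ler_pM; lra.
  by have := gapS s t u Ss St Su ltac:(lra) ltac:(lra); rewrite ltNge far.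
have mU : measurable ([set` `[al, al + d]] `|` [set` `[be - d, be]]).
  by apply: measurableU; apply: measurable_itv.
apply: (le_trans (@le_measure _ _ _ lebesgue_measure _ _ (mem_set mS) (mem_set mU) cover)).
have sum_le : (lebesgue_measure ([set` `[al, (al + d)%R]] : set R)
    + lebesgue_measure ([set` `[(be - d)%R, be]] : set R) <= (2 * d)%:E)%E.
  by rewrite !lebesgue_measure_cc -?EFinD ?lee_fin; lra.
exact: le_trans (measureU2 lebesgue_measure (measurable_itv _) (measurable_itv _)) sum_le.
Qed.

End lebesgue_bounds.

Section product_bounds.
Context d1 d2 (T1 : measurableType d1) (T2 : measurableType d2) (R : realType).
Variables (mu : {measure set T1 -> \bar R}) (nu : {sigma_finite_measure set T2 -> \bar R}).
Local Open Scope ereal_scope.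

Lemma product_measure1_le_sections (A : set (T1 * T2)) (B : set T1) (c : R) :
  measurable A -> measurable B -> (0 <= c)%R ->
  (forall p, nu (xsection A p) <= (c * \1_B p)%:E) ->
  (mu \x nu) A <= c%:E * mu B.
Proof.
move=> mA mB c0 secA.
rewrite [X in X <= _]/product_measure1 -(setIT B) -(integral_indic _ measurableT mB).
rewrite -(integralZl_indic measurableT (fun=> B)) //; last first.
  by move=> c_lt0; move: c0; rewrite leNgt c_lt0.
apply: ge0_le_integral => //.
- exact: measurable_fun_xsection.
- apply/measurable_EFinP/measurable_funM; first exact: measurable_cst.
  exact: measurable_indic.
- by move=> p _; exact: secA.
Qed.

End product_bounds.

Section measurability.
Variable R : realType.
Local Notation T3 := ((R * R) * R)%type.

Lemma measurable_xlnx : measurable_fun setT (@xlnx R).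
Proof. exact: measurable_funM (@measurable_id _ _ setT) (@measurable_ln R). Qed.

Lemma measurable_entropy_gap : measurable_fun setT (@entropy_gap R).
Proof.
have m1 : measurable_fun setT (fun p : T3 => p.1.1).
  exact: measurableT_comp measurable_fst measurable_fst.
have m2 : measurable_fun setT (fun p : T3 => p.1.2).
  exact: measurableT_comp measurable_snd measurable_fst.
have m3 : measurable_fun setT (fun p : T3 => p.2) by exact: measurable_snd.
have mx (f : T3 -> R) : measurable_fun setT f -> measurable_fun setT (fun p : T3 => xlnx (f p)).
  exact: measurableT_comp measurable_xlnx.
apply: measurable_funD; last exact: measurable_funD.
apply: measurable_funM; last exact: measurable_cst.
repeat apply: measurable_funB; repeat apply: measurable_funD; apply: mx => //;
  repeat apply: measurable_funB => //; exact: measurable_cst.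
Qed.

Lemma measurable_B0 : measurable (@B0 R).
Proof.
have -> : @B0 R = (([set` `]0, 1[] `*` [set` `]0, 1[]) `*` [set` `]0, 1[]) `&`
    ((fun p : T3 => p.1.2 + p.2) @^-1` [set` `]-oo, 1[]).
  apply/seteqP; split=> -[[a f0] f1] /=; rewrite !in_itv /= ?andbT.
    by case=> -> -> -> ->.
  by move=> [[[-> ->] ->] ->].
apply: measurableI.
  by apply: measurableX; [apply: measurableX|]; apply: measurable_itv.
rewrite -[X in measurable X]setTI.
have m12 : measurable_fun setT (fun p : T3 => p.1.2).
  exact: measurableT_comp measurable_snd measurable_fst.
by apply: (measurable_funD m12 measurable_snd) => //; exact: measurable_itv.
Qed.

Lemma measurable_Bset N P : measurable (@Bset R N P).
Proof.
rewrite Bset_entropy_gap; apply: measurableI; first exact: measurable_B0.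
by rewrite -[X in measurable X]setTI; apply: measurable_entropy_gap => //; exact: measurable_itv.
Qed.

End measurability.

Section volumes.
Variable R : realType.
Local Open Scope ereal_scope.

Lemma Vol3_cuboid (A1 A2 A3 : set R) :
  measurable A1 -> measurable A2 -> measurable A3 ->
  Vol3 ((A1 `*` A2) `*` A3) =
    lebesgue_measure A1 * lebesgue_measure A2 * lebesgue_measure A3.
Proof.
move=> mA1 mA2 mA3.
have -> : Vol3 ((A1 `*` A2) `*` A3) =
    (lebesgue_measure \x lebesgue_measure) (A1 `*` A2) * lebesgue_measure A3.
  by apply: product_measure1E => //; exact: measurableX.
by rewrite product_measure1E.
Qed.

Lemma le_Vol3 (A B : set ((R * R) * R)) :
  measurable A -> measurable B -> A `<=` B -> Vol3 A <= Vol3 B.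
Proof.
move=> mA mB AB.
exact: (@le_measure _ _ _ ((@lebesgue_measure R \x @lebesgue_measure R) \x @lebesgue_measure R))
  _ _ (mem_set mA) (mem_set mB) AB.
Qed.

Lemma Vol3_B0_bounds : (1 / 4)%:E <= Vol3 (@B0 R) <= 1.
Proof.
set I := [set` `]0%R, 1%R[] : set R; set J := [set` `]0%R, (1 / 2)%R[] : set R.
have mI : measurable I by exact: measurable_itv.
have mJ : measurable J by exact: measurable_itv.
have mB0 := @measurable_B0 R.
have lower : (I `*` J) `*` J `<=` @B0 R.
  move=> [[a f0] f1]; rewrite /I /J /= !in_itv /= => -[[ha /andP[? ?]] /andP[? ?]].
  by split=> //; try (apply/andP; split); lra.
have upper : @B0 R `<=` (I `*` I) `*` I.
  by move=> [[a f0] f1] [ha hf0 hf1 _]; rewrite /I /= !in_itv.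
apply/andP; split.
  apply: le_trans (le_Vol3 (measurableX (measurableX mI mJ) mJ) mB0 lower).
  rewrite Vol3_cuboid // !lebesgue_measure_oo; [|lra..].
  by rewrite -!EFinM lee_fin; lra.
apply: le_trans (le_Vol3 mB0 (measurableX (measurableX mI mI) mI) upper) _.
rewrite Vol3_cuboid // !lebesgue_measure_oo; [|lra..].
by rewrite -!EFinM lee_fin; lra.
Qed.

Local Notation unit_square := ([set` `]0%R, 1%R[] `*` [set` `]0%R, 1%R[] : set (R * R)).

Lemma lebesgue_measure_Bset_section N P p : (0 < xNP R N P)%R ->
  lebesgue_measure (xsection (@Bset R N P) p)
    <= ((4 * Num.sqrt (xNP R N P)) * \1_unit_square p)%:E.
Proof.
move=> x0; set x := xNP R N P; case: p => a f0.
have [inside|outside] := pselect (unit_square (a, f0)); last first.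
  rewrite (_ : xsection _ _ = set0) ?measure0 ?lee_fin ?mulr_ge0 ?sqrtr_ge0 //.
  apply/seteqP; split=> y //; rewrite /xsection /= in_setE => -[[ha hf0 _ _] _].
  by apply: outside; rewrite /= !in_itv.
rewrite indicE mem_set // mulr1 (_ : 4 * Num.sqrt x = 2 * (2 * Num.sqrt x))%R; last ring.
apply: lebesgue_measure_le_of_gap.
- by apply: measurable_xsection; exact: measurable_Bset.
- by rewrite mulr_gt0 ?sqrtr_gt0.
- by exists 0%R => y; rewrite /xsection /= in_setE => -[[_ _ /andP[/ltW]]].
- by exists 1%R => y; rewrite /xsection /= in_setE => -[[_ _ /andP[_ /ltW]]].
- move=> s t u Ss St Su st tu.
  have := Bset_section_gap Ss St Su st tu.
  by rewrite -/x exprMn sqr_sqrtr ?ltW //; lra.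
Qed.

Lemma Vol3_Bset_le N P : (0 < xNP R N P)%R ->
  Vol3 (@Bset R N P) <= (4 * Num.sqrt (xNP R N P))%:E.
Proof.
move=> x0.
have msq : measurable unit_square by apply: measurableX; exact: measurable_itv.
have c0 : (0 <= 4 * Num.sqrt (xNP R N P))%R by rewrite mulr_ge0 ?sqrtr_ge0.
have := product_measure1_le_sections (lebesgue_measure \x lebesgue_measure)
  (nu := lebesgue_measure) (@measurable_Bset R N P) msq c0
  (fun p => @lebesgue_measure_Bset_section N P p x0).
move=> /le_trans; apply.
have sq : ((@lebesgue_measure R) \x (@lebesgue_measure R)) unit_square <= 1.
  rewrite (_ : (_ \x _) _ = lebesgue_measure ([set` `]0%R, 1%R[] : set R) *
                             lebesgue_measure ([set` `]0%R, 1%R[] : set R)).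
    by rewrite lebesgue_measure_oo ?ler01 // subr0 mule1.
  by apply: product_measure1E; exact: measurable_itv.
by rewrite -[leRHS]mule1; apply: lee_pmul; rewrite ?lee_fin.
Qed.

End volumes.

Lemma xNP_gt0 (R : realType) N P : (2 <= N)%N -> (2 <= P)%N -> 0 < xNP R N P.
Proof.
have term_gt0 n : (2 <= n)%N -> 0 < log2 (n%:R : R) / n%:R.
  move=> n2; rewrite divr_gt0 ?ltr0n 1?(leq_trans _ n2) //.
  by rewrite divr_gt0 ?ln2_gt0 // ln_gt0 // ltr1n.
by move=> N2 P2; rewrite addr_gt0 ?term_gt0.
Qed.

Theorem mainTheorem6 (R : realType) :
  exists K1 K2 : R, 0 < K1 /\ 0 < K2 /\
    forall N P : nat, (2 <= N)%N -> (2 <= P)%N ->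
      fine (Vol3 (@Bset R N P)) / fine (Vol3 (@B0 R)) <=
        K1 * (@xNP R N P) `^ (1 / 2) + K2 * (@xNP R N P) `^ (3 / 2).
Proof.
exists 16, 1; split; first lra; split; first lra.
move=> N P N2 P2.
have x0 := xNP_gt0 R N2 P2; set x := xNP R N P in x0 *.
have /andP[B0_lb B0_ub] := Vol3_B0_bounds R.
have B_ub := Vol3_Bset_le x0; rewrite -/x in B_ub.
have B_ge0 : (0 <= Vol3 (@Bset R N P))%E by exact: measure_ge0.
have B0_fin : Vol3 (@B0 R) \is a fin_num.
  by rewrite ge0_fin_numE ?(le_lt_trans B0_ub) ?ltry // (le_trans _ B0_lb) ?lee_fin.
have B_fin : Vol3 (@Bset R N P) \is a fin_num.
  by rewrite ge0_fin_numE // (le_lt_trans B_ub) ?ltry.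
move: B0_lb B_ub B_ge0; rewrite -(fineK B0_fin) -(fineK B_fin) !lee_fin.
set v0 := fine _; set v := fine _ => v0_lb v_ub v_ge0 /=.
rewrite div1r powR12_sqrt ?(ltW x0) // ler_pdivrMr; last lra.
have := powR_ge0 x (3 / 2); have := sqrtr_ge0 x; nra.
Qed.
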